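(* Let $b\ge 2$ and $m\ge 0$ be integers. Consider the following nondeterministic procedure. Set $\mathcal U_1=[0,1)^2$. For $n=1,2,\ldots$: if $\mathcal U_n=\emptyset$, stop; otherwise choose an arbitrary box $X_n=\prod_{j=1}^2\left[\frac{u_j(n)}{b^m},\frac{u_j(n)+1}{b^m}\right)\subseteq \mathcal U_n$ with $u_j(n)\in\{0,1,\ldots,b^m-1\}$, and set $\mathcal U_{n+1}=\mathcal U_n\setminus\bigcup_{E\in\mathcal E_m(X_n)}E$. If a run of this procedure stops after exactly $b^m$ boxes $X_1,\ldots,X_{b^m}$ have been chosen, then these boxes constitute a $(0,m,2)$-net in base $b$, i.e., every elementary $b$-adic interval of volume $b^{-m}$ in $[0,1)^2$ contains exactly one of $X_1,\ldots,X_{b^m}$ (equivalently, for any choice of points $\boldsymbol x_n\in X_n$, the set $\{\boldsymbol x_1,\ldots,\boldsymbol x_{b^m}\}$ is a $(0,m,2)$-net in base $b$).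
   Context: An elementary $b$-adic interval in $[0,1)^s$ is a set $\prod_{j=1}^s\left[\frac{a_j}{b^{d_j}},\frac{a_j+1}{b^{d_j}}\right)$ with $d_j\in\mathbb N_0$ and $a_j\in\{0,1,\ldots,b^{d_j}-1\}$; its volume is $b^{-(d_1+\cdots+d_s)}$. For a box $X=\prod_{j=1}^s\left[\frac{u_j}{b^m},\frac{u_j+1}{b^m}\right)$, $\mathcal E_m(X)$ denotes the set of all elementary $b$-adic intervals of volume $b^{-m}$ that contain $X$ as a subset. For integers $0\le t\le m$, a $b^m$-element point set $\mathcal P$ in $[0,1)^s$ is a $(t,m,s)$-net in base $b$ if every elementary $b$-adic interval of volume $b^{t-m}$ contains exactly $b^t$ points of $\mathcal P$. *)

From mathcomp Require Import all_boot all_order all_algebra.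
From mathcomp Require Import boolp classical_sets reals.
Unset Printing Implicit Defensive.
Import Order.TTheory GRing.Theory Num.Theory.
Local Open Scope classical_set_scope.
Local Open Scope ring_scope.

Definition badic (R : realType) (b d a : nat) : set R :=
  [set x | a%:R / (b ^ d)%:R <= x /\ x < a.+1%:R / (b ^ d)%:R].

Definition bbox (R : realType) (b d1 d2 a1 a2 : nat) : set (R * R) :=
  [set p | badic R b d1 a1 p.1 /\ badic R b d2 a2 p.2].

Definition is_elem (R : realType) (b k : nat) (E : set (R * R)) : Prop :=
  exists d1 d2 a1 a2 : nat,
    [/\ (d1 + d2 = k)%N, (a1 < b ^ d1)%N, (a2 < b ^ d2)%N & E = bbox R b d1 d2 a1 a2].

Definition cell (R : realType) (b m : nat) (u : nat * nat) : set (R * R) :=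
  bbox R b m m u.1 u.2.

Definition union_Em (R : realType) (b m : nat) (X : set (R * R)) : set (R * R) :=
  [set p | exists E, [/\ is_elem R b m E, X `<=` E & E p]].

Definition unit_square (R : realType) : set (R * R) :=
  [set p | (0 <= p.1 /\ p.1 < 1) /\ (0 <= p.2 /\ p.2 < 1)].

(* U R b m u n = U_{n+1} of the procedure, where box X_{k+1} = cell (u k) (0-based) *)
Fixpoint Useq (R : realType) (b m : nat) (u : nat -> nat * nat) (n : nat)
  : set (R * R) :=
  match n with
  | 0%N => unit_square R
  | n'.+1 => Useq R b m u n' `\` union_Em R b m (cell R b m (u n'))
  end.

Definition is_net (R : realType) (b t m N : nat) (x : 'I_N -> R * R) : Prop :=
  [/\ (t <= m)%N, N = (b ^ m)%N, (forall i, unit_square R (x i)) &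
     forall E, is_elem R b (m - t) E ->
       #|[set i : 'I_N | `[< E (x i) >]]| = (b ^ t)%N].

From mathcomp Require Import all_boot all_order all_algebra.
From mathcomp Require Import boolp classical_sets reals.
From mathcomp Require Import zify.
Import Order.TTheory GRing.Theory Num.Theory.
Local Open Scope classical_set_scope.
Local Open Scope ring_scope.

(* Since X_n lies in U_n, no box chosen later can lie in an elementary
   interval of volume b^-m containing an earlier box: distinct boxes never
   share such an interval.  For a fixed shape (d1, d2) with d1 + d2 = m, the
   interval of that shape containing X_n is read off from the digits of u(n),
   so this is an injection of the b^m boxes into the b^d1 * b^d2 = b^m
   intervals of that shape, hence a bijection. *)

Section NatFractions.
Variable R : realType.

Lemma ltr_divn (p q M : nat) : (0 < M)%N ->
  (p%:R / M%:R < q%:R / M%:R :> R) = (p < q)%N.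
Proof. by move=> M_gt0; rewrite ltr_pM2r ?invr_gt0 ?ltr0n // ltr_nat. Qed.

Lemma ler_divn (p q M : nat) : (0 < M)%N ->
  (p%:R / M%:R <= q%:R / M%:R :> R) = (p <= q)%N.
Proof. by move=> M_gt0; rewrite ler_pM2r ?invr_gt0 ?ltr0n // ler_nat. Qed.

Lemma divn_scale (a D B : nat) : (0 < B)%N ->
  a%:R / D%:R = (a * B)%:R / (D * B)%:R :> R.
Proof.
move=> B_gt0; have B_neq0 : B%:R != 0 :> R by rewrite pnatr_eq0 -lt0n.
by rewrite !natrM -mulf_div divff // mulr1.
Qed.

End NatFractions.

Section Cells.
Context {R : realType} {b m : nat}.
Hypothesis b_ge2 : (2 <= b)%N.

Lemma expb_gt0 (d : nat) : (0 < b ^ d)%N.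
Proof. by rewrite expn_gt0; lia. Qed.

Lemma badic_coarsen {d u a : nat} {x : R} : (d <= m)%N -> badic R b m u x ->
  badic R b d a x <-> a = (u %/ b ^ (m - d))%N.
Proof.
move=> le_dm [ux_ge ux_lt].
have B_gt0 := expb_gt0 (m - d).
have M_gt0 := expb_gt0 m.
have bmE : (b ^ m = b ^ d * b ^ (m - d))%N by rewrite -expnD subnKC.
rewrite /badic /= (divn_scale R a _ _ B_gt0) (divn_scale R a.+1 _ _ B_gt0) -bmE.
split=> [[ax_ge ax_lt] | ->].
- have lo : (a * b ^ (m - d) < u.+1)%N.
    by rewrite -(ltr_divn R _ _ _ M_gt0); apply: le_lt_trans ax_ge ux_lt.
  have hi : (u < a.+1 * b ^ (m - d))%N.
    by rewrite -(ltr_divn R _ _ _ M_gt0); apply: le_lt_trans ux_ge ax_lt.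
  have : (a <= u %/ b ^ (m - d))%N by rewrite leq_divRL //; lia.
  have : (u %/ b ^ (m - d) < a.+1)%N by rewrite ltn_divLR.
  lia.
- split; first by apply: le_trans ux_ge; rewrite ler_divn // leq_divM.
  by apply: lt_le_trans ux_lt _; rewrite ler_divn // ltn_ceil.
Qed.

Lemma cell_corner (v : nat * nat) :
  cell R b m v (v.1%:R / (b ^ m)%:R, v.2%:R / (b ^ m)%:R).
Proof. by split; split=> //=; rewrite ltr_divn ?expb_gt0. Qed.

Lemma cell_sub_bbox (d1 d2 : nat) (v : nat * nat) :
  (d1 <= m)%N -> (d2 <= m)%N ->
  cell R b m v `<=` bbox R b d1 d2 (v.1 %/ b ^ (m - d1)) (v.2 %/ b ^ (m - d2)).
Proof.
move=> le1 le2 p [p1 p2].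
by split; [exact/(badic_coarsen le1 p1) | exact/(badic_coarsen le2 p2)].
Qed.

Lemma elem_cellP {E : set (R * R)} {v : nat * nat} {p : R * R} :
  is_elem R b m E -> cell R b m v p -> E p <-> cell R b m v `<=` E.
Proof.
move=> [d1 [d2 [a1 [a2 [dE _ _ ->]]]]] [p1 p2].
have le1 : (d1 <= m)%N by lia.
have le2 : (d2 <= m)%N by lia.
split=> [[e1 e2] q [q1 q2] | /(_ p)]; last by apply; split.
by split; [apply/(badic_coarsen le1 q1)/(badic_coarsen le1 p1) |
           apply/(badic_coarsen le2 q2)/(badic_coarsen le2 p2)].
Qed.

Lemma cell_sub_unit_square {v : nat * nat} :
  (v.1 < b ^ m)%N -> (v.2 < b ^ m)%N -> cell R b m v `<=` unit_square R.
Proof.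
have M_gt0 := expb_gt0 m.
move=> v1_lt v2_lt p [[p1_ge p1_lt] [p2_ge p2_lt]].
split; split.
- by apply: le_trans p1_ge; rewrite divr_ge0.
- by apply: lt_le_trans p1_lt _; rewrite ler_pdivrMr ?ltr0n // mul1r ler_nat.
- by apply: le_trans p2_ge; rewrite divr_ge0.
- by apply: lt_le_trans p2_lt _; rewrite ler_pdivrMr ?ltr0n // mul1r ler_nat.
Qed.

Lemma Useq_antitone {u : nat -> nat * nat} {k n : nat} :
  (k <= n)%N -> Useq R b m u n `<=` Useq R b m u k.
Proof.
move=> /subnKC <-; elim: (n - k)%N => [|j IH]; first by rewrite addn0.
by rewrite addnS => p [/IH].
Qed.

End Cells.

Section Run.
Context {R : realType} {b m : nat} {u : nat -> nat * nat}.
Hypothesis b_ge2 : (2 <= b)%N.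
Hypothesis run : forall n, (n < b ^ m)%N ->
  [/\ ((u n).1 < b ^ m)%N, ((u n).2 < b ^ m)%N &
      cell R b m (u n) `<=` Useq R b m u n].

Lemma run_later_cell_notin {E : set (R * R)} {k l : nat} : is_elem R b m E ->
  (k < l)%N -> (l < b ^ m)%N ->
  cell R b m (u k) `<=` E -> ~ cell R b m (u l) `<=` E.
Proof.
move=> hE lt_kl l_lt ukE ulE.
have corner := cell_corner (R:=R) (m:=m) b_ge2 (u l).
have [_ _ /(_ _ corner) inU] := run _ l_lt.
have [_ notin_k] := Useq_antitone lt_kl _ inU.
by apply: notin_k; exists E; split=> //; apply: ulE.
Qed.

Lemma run_cell_unique {E : set (R * R)} {n n' : nat} : is_elem R b m E ->
  (n < b ^ m)%N -> (n' < b ^ m)%N ->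
  cell R b m (u n) `<=` E -> cell R b m (u n') `<=` E -> n = n'.
Proof.
move=> hE n_lt n'_lt unE un'E.
case: (ltngtP n n') => // [lt_nn' | lt_n'n].
- by case: (run_later_cell_notin hE lt_nn' n'_lt unE).
- by case: (run_later_cell_notin hE lt_n'n n_lt un'E).
Qed.

Lemma run_cell_exists {E : set (R * R)} : is_elem R b m E ->
  exists2 n, (n < b ^ m)%N & cell R b m (u n) `<=` E.
Proof.
move=> [d1 [d2 [a1 [a2 [dE a1_lt a2_lt ->]]]]].
have bmE : (b ^ m = b ^ d1 * b ^ d2)%N by rewrite -expnD dE.
have [le1 le2] : (d1 <= m)%N /\ (d2 <= m)%N by lia.
have [d1E d2E] : (m - d1 = d2)%N /\ (m - d2 = d1)%N by lia.
have digits_lt (n : 'I_(b ^ m)) :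
    ((u n).1 %/ b ^ (m - d1) < b ^ d1)%N /\ ((u n).2 %/ b ^ (m - d2) < b ^ d2)%N.
  have [lt1 lt2 _] := run _ (ltn_ord n).
  by rewrite d1E d2E !ltn_divLR ?expb_gt0 // -bmE mulnC -bmE.
pose f n : 'I_(b ^ d1) * 'I_(b ^ d2) :=
  (Ordinal (proj1 (digits_lt n)), Ordinal (proj2 (digits_lt n))).
have f_bbox (n : 'I_(b ^ m)) : cell R b m (u n) `<=` bbox R b d1 d2 (f n).1 (f n).2.
  exact: cell_sub_bbox.
have f_inj : injective f.
  move=> n n' fE; apply: val_inj.
  apply: (run_cell_unique _ (ltn_ord n) (ltn_ord n') (f_bbox n)).
    by exists d1, d2, (f n).1, (f n).2; split.
  by rewrite fE; apply: f_bbox.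
have := inj_card_onto f_inj _ (Ordinal a1_lt, Ordinal a2_lt).
rewrite card_prod !card_ord -bmE leqnn => /(_ isT) /codomP [n fnE].
exists (val n); first exact: ltn_ord.
by have := f_bbox n; rewrite -fnE.
Qed.

Lemma run_cell_exists_unique {E : set (R * R)} : is_elem R b m E ->
  exists! n, (n < b ^ m)%N /\ cell R b m (u n) `<=` E.
Proof.
move=> hE; have [n n_lt unE] := run_cell_exists hE.
exists n; split=> // n' [n'_lt un'E].
exact: run_cell_unique hE n_lt n'_lt unE un'E.
Qed.

End Run.

Theorem mainTheorem3 (R : realType) (b m : nat) (hb : (2 <= b)%N)
  (u : nat -> nat * nat) :
  (forall n, (n < b ^ m)%N ->
     [/\ ((u n).1 < b ^ m)%N, ((u n).2 < b ^ m)%N &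
         cell R b m (u n) `<=` Useq R b m u n]) ->
  Useq R b m u (b ^ m) = set0 ->
  (forall E, is_elem R b m E ->
     exists! n, (n < b ^ m)%N /\ cell R b m (u n) `<=` E) /\
  (forall x : 'I_(b ^ m) -> R * R,
     (forall i : 'I_(b ^ m), cell R b m (u i) (x i)) ->
     is_net R b 0 m (b ^ m) x).
Proof.
(* Having chosen b^m boxes already forces the net property. *)
move=> run _.
have unique_cell E := @run_cell_exists_unique R b m u hb run E.
split=> // x x_cell; split=> [//|//|i|E].
  have [lt1 lt2 _] := run _ (ltn_ord i).
  exact: (cell_sub_unit_square hb lt1 lt2 _ (x_cell i)).
rewrite subn0 expn0 => hE.
have [n [[n_lt unE] n_uniq]] := unique_cell E hE.
rewrite (@eq_card _ _ (pred1 (Ordinal n_lt))) ?card1 // => i.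
apply/idP/idP => [/set_mem/asboolP xiE | /eqP ->].
  apply/eqP/val_inj/esym/n_uniq; split; first exact: ltn_ord.
  exact/(elem_cellP hb hE (x_cell i)).
by apply/mem_set/asboolP/(elem_cellP hb hE (x_cell _)).
Qed.
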